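(* Let $G$ be a graph with $n\ge5$ vertices that has a fractional weak $r$-neighborhood cover $(\mathcal X,f)$ with degree $d$ and spread $s$. Then $G$ has a weak $r$-neighborhood cover $\mathcal Y\subseteq\mathcal X$ with degree $36\ln(n)\,d$ and spread $s$.
   Context: A fractional weak $r$-neighborhood cover with degree $d$ and spread $s$ of $G$ is a family $\mathcal X$ of subsets of $V(G)$ with a function $f\colon\mathcal X\to[0,1]$ such that each $X\in\mathcal X$ is contained in $N_s[c]$ for some vertex $c$; for every vertex $v$, $\sum_{X\in\mathcal X:\,N_r[v]\subseteq X}f(X)\ge1$; and for every vertex $v$, $\sum_{X\in\mathcal X:\,v\in X}f(X)\le d$. A (non-fractional) weak $r$-neighborhood cover with degree $d$ and spread $s$ is a family of vertex sets, each contained in some $N_s[c]$, such that each $N_r[w]$ is contained in some member and each vertex lies in at most $d$ members. *)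

From HB Require Import structures.
From mathcomp Require Import all_boot all_order all_algebra.
From mathcomp Require Import reals exp.
Set Implicit Arguments. Unset Strict Implicit. Unset Printing Implicit Defensive.
Import Order.TTheory GRing.Theory Num.Theory.

Definition simple_graph (T : finType) (e : rel T) : Prop :=
  symmetric e /\ irreflexive e.

Fixpoint nball (T : finType) (e : rel T) (r : nat) (v : T) : {set T} :=
  match r with
  | 0 => [set v]
  | k.+1 => nball e k v :|: [set w | [exists u in nball e k v, e u w]]
  end.

Local Open Scope ring_scope.

Definition frac_weak_nbhd_cover (R : realType) (T : finType) (e : rel T)
    (r s : nat) (d : R) (Xs : {set {set T}}) (f : {set T} -> R) : Prop :=
  [/\ forall X, X \in Xs -> 0 <= f X <= 1,
      forall X, X \in Xs -> exists c : T, X \subset nball e s c,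
      forall v : T, 1 <= \sum_(X in Xs | nball e r v \subset X) f X
    & forall v : T, \sum_(X in Xs | v \in X) f X <= d].

Definition weak_nbhd_cover (R : realType) (T : finType) (e : rel T)
    (r s : nat) (D : R) (Ys : {set {set T}}) : Prop :=
  [/\ forall Y, Y \in Ys -> exists c : T, Y \subset nball e s c,
      forall w : T, exists2 Y, Y \in Ys & nball e r w \subset Y
    & forall v : T, (#|[set Y in Ys | v \in Y]|%:R : R) <= D].

(* Randomized rounding with a pessimistic estimator.  Select every X in Xs
   independently with probability min(1, (ln n + 1) f X).  A ball N_r[v] then
   stays uncovered with probability at most exp(-(ln n + 1)) = 1/(e n), and
   E[e^(deg v)] <= e^(3 (ln n + 1) d).  Hence the potential
     sum_v [N_r[v] uncovered] + sum_v e^(deg v - 36 ln(n) d)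
   has expectation < 1, so some outcome of positive probability has potential
   < 1: it selects only members of Xs, covers every ball, and has degree
   < 36 ln(n) d at every vertex. *)

From HB Require Import structures.
From mathcomp Require Import all_boot all_order all_algebra.
From mathcomp Require Import reals sequences exp lra.

Set Implicit Arguments.
Unset Strict Implicit.
Unset Printing Implicit Defensive.

Import Order.TTheory GRing.Theory Num.Theory.
Local Open Scope ring_scope.

Lemma exists_pos_weight_lt (R : realFieldType) (A : finType) (w F : A -> R) (t : R) :
  (forall a, 0 <= w a) -> \sum_a w a = 1 -> \sum_a w a * F a < t ->
  exists2 a, 0 < w a & F a < t.
Proof.
move=> w_ge0 w_sum1 mean_lt.
case: (pickP (fun a => (0 < w a) && (F a < t))) => [a /andP[]|none]; first by exists a.
suff : t <= \sum_a w a * F a by rewrite leNgt mean_lt.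
rewrite -[t]mul1r -w_sum1 mulr_suml; apply: ler_sum => a _.
have := none a; have := w_ge0 a; rewrite le0r => /orP[/eqP->|w_gt0]; first by rewrite !mul0r.
by rewrite w_gt0 /= => /negbT; rewrite -leNgt => Ft; rewrite ler_wpM2l.
Qed.

Section BernoulliProduct.

Variables (R : realType) (I : finType) (p : I -> R).

Definition bern_weight (g : {ffun I -> bool}) : R :=
  \prod_i (if g i then p i else 1 - p i).

Lemma bern_expect_prod (a : I -> R) :
  \sum_g bern_weight g * \prod_i (if g i then a i else 1)
  = \prod_i (1 - p i + p i * a i).
Proof.
symmetry.
transitivity (\prod_i \sum_(b : bool)
                 ((if b then p i else 1 - p i) * (if b then a i else 1))).
  by apply: eq_bigr => i _; rewrite big_bool /= mulr1 addrC.
by rewrite bigA_distr_bigA; apply: eq_bigr => g _; rewrite -big_split.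
Qed.

Lemma sum_bern_weight : \sum_g bern_weight g = 1.
Proof.
transitivity (\prod_i (1 - p i + p i * 1)); last first.
  by apply: big1 => i _; rewrite mulr1 subrK.
rewrite -bern_expect_prod; apply: eq_bigr => g _.
by rewrite big1 ?mulr1 // => i _; rewrite if_same.
Qed.

Lemma bern_weight_ge0 g : (forall i, 0 <= p i <= 1) -> 0 <= bern_weight g.
Proof.
move=> p01; apply: prodr_ge0 => i _; have /andP[p_ge0 p_le1] := p01 i.
by case: (g i); rewrite ?subr_ge0.
Qed.

Lemma bern_support g i : 0 < bern_weight g -> g i -> p i != 0.
Proof.
rewrite /bern_weight (bigD1 i) //= => + gi; rewrite gi.
by apply: contraTneq => ->; rewrite mul0r ltxx.
Qed.

End BernoulliProduct.

Lemma expR1_le4 (R : realType) : expR 1 <= 4 :> R.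
Proof.
have half_le2 : expR (1/2) <= 2 :> R.
  have := expR_ge1Dx (- (1/2) : R); rewrite expRN => H.
  have hp : 0 < expR (1/2 : R) := expR_gt0 _.
  rewrite -(@ler_pM2r _ (expR (1/2 : R))) // mulVf ?gt_eqF // in H.
  lra.
have -> : (1 : R) = 1/2 + 1/2 by lra.
by rewrite expRD; have := expR_gt0 (1/2 : R); nra.
Qed.

Lemma one_sub_min1_le_expR (R : realType) (y : R) :
  1 - Order.min 1 y <= expR (- y).
Proof.
have [_|_] := leP 1 y; first by rewrite subrr expR_ge0.
by have := expR_ge1Dx (- y); lra.
Qed.

Lemma in_nball (T : finType) (e : rel T) r v : v \in nball e r v.
Proof. by elim: r => [|r IH] /=; rewrite !inE ?IH. Qed.

Section RandomizedRounding.

Variables (R : realType) (T : finType) (e : rel T) (r s : nat) (d : R).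
Variables (Xs : {set {set T}}) (f : {set T} -> R).

Definition uncovered (v : T) (g : {ffun {set T} -> bool}) : R :=
  (~~ [exists X, g X && (nball e r v \subset X)])%:R.

Definition degree_pot (D : R) (v : T) (g : {ffun {set T} -> bool}) : R :=
  expR (#|[set X | g X & v \in X]|%:R - D).

Definition potential (D : R) (g : {ffun {set T} -> bool}) : R :=
  \sum_v uncovered v g + \sum_v degree_pot D v g.

Lemma uncoveredE v g :
  uncovered v g = \prod_X (if g X then (~~ (nball e r v \subset X))%:R else 1).
Proof.
rewrite /uncovered; case: existsP => [[X /andP[gX sub]]|none] /=.
  by rewrite (bigD1 X) //= gX sub mul0r.
rewrite big1 // => X _; case: ifP => // gX.
suff /negbTE-> : ~~ (nball e r v \subset X) by [].
by apply/negP => sub; apply: none; exists X; rewrite gX.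
Qed.

Lemma degree_potE D v g :
  degree_pot D v g
  = expR (- D) * \prod_X (if g X then (if v \in X then expR 1 else 1) else 1).
Proof.
have -> : \prod_X (if g X then (if v \in X then expR 1 else 1) else 1)
          = \prod_(X in [set X | g X & v \in X]) expR 1 :> R.
  rewrite [RHS]big_mkcond; apply: eq_bigr => X _.
  by rewrite inE; case: (g X); case: (v \in X).
by rewrite prodr_const -expRM_natl mulr1 -expRD addrC.
Qed.

Lemma uncovered_le_potential D v g : uncovered v g <= potential D g.
Proof.
rewrite /potential (bigD1 v) //= -addrA lerDl.
by rewrite addr_ge0 ?sumr_ge0 // => u _; exact: expR_ge0.
Qed.

Lemma degree_pot_le_potential D v g : degree_pot D v g <= potential D g.
Proof.
rewrite /potential [X in _ + X](bigD1 v) //= addrCA lerDl.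
by rewrite addr_ge0 ?sumr_ge0 // => u _; exact: expR_ge0.
Qed.

Hypothesis cover : frac_weak_nbhd_cover e r s d Xs f.

Lemma frac_cover_deg_ge1 (v : T) : 1 <= d.
Proof.
case: cover => f01 _ covered degree.
apply: le_trans (covered v) (le_trans _ (degree v)).
rewrite big_mkcond [leRHS]big_mkcond /=; apply: ler_sum => X _.
case: (X \in Xs) (f01 X) => //= /(_ isT) /andP[fX_ge0 _].
case: ifP => [sub|_]; first by rewrite (subsetP sub _ (in_nball e r v)).
by case: ifP.
Qed.

Variable c : R.
Hypothesis c_ge0 : 0 <= c.

Definition sel_prob (X : {set T}) : R :=
  if X \in Xs then Order.min 1 (c * f X) else 0.

Local Notation w := (bern_weight sel_prob).

Lemma sel_prob01 X : 0 <= sel_prob X <= 1.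
Proof.
rewrite /sel_prob; case: ifP => [XXs|_]; last by rewrite lexx ler01.
case: cover => f01 _ _ _; have /andP[fX_ge0 _] := f01 X XXs.
by rewrite ge_min lexx le_min ler01 mulr_ge0.
Qed.

Lemma sel_prob_le X : X \in Xs -> sel_prob X <= c * f X.
Proof. by move=> XXs; rewrite /sel_prob XXs ge_min lexx orbT. Qed.

Lemma expect_uncovered_le v : \sum_g w g * uncovered v g <= expR (- c).
Proof.
case: cover => _ _ covered _.
under eq_bigr do rewrite uncoveredE.
rewrite bern_expect_prod.
apply: (@le_trans _ _ (expR (- (c * \sum_(X in Xs | nball e r v \subset X) f X)))); last first.
  by rewrite ler_expR lerN2 -{1}(mulr1 c) ler_wpM2l.
rewrite mulr_sumr -sumrN expR_sum [leRHS]big_mkcond /=.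
apply: ler_prod => X _; have /andP[_ p_le1] := sel_prob01 X.
case: (nball e r v \subset X) => /=; last by rewrite andbF mulr1 subrK lexx ler01.
rewrite mulr0 addr0 subr_ge0 p_le1 andbT /=.
case: ifP => [XXs|XnXs]; last by rewrite /sel_prob XnXs subr0.
by rewrite /sel_prob XXs one_sub_min1_le_expR.
Qed.

Lemma expect_degree_pot_le D v :
  \sum_g w g * degree_pot D v g <= expR (3 * c * d - D).
Proof.
case: cover => _ _ _ degree.
under eq_bigr do rewrite degree_potE mulrCA.
rewrite -mulr_sumr bern_expect_prod addrC expRD ler_wpM2l ?expR_ge0 //.
apply: (@le_trans _ _ (expR (3 * c * \sum_(X in Xs | v \in X) f X))); last first.
  by rewrite ler_expR ler_wpM2l // mulr_ge0.
rewrite mulr_sumr expR_sum [leRHS]big_mkcond /=.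
apply: ler_prod => X _; have /andP[p_ge0 p_le1] := sel_prob01 X.
case: (v \in X) => /=; last by rewrite andbF mulr1 subrK lexx ler01.
rewrite andbT; case: ifP => [XXs|XnXs]; last first.
  by rewrite /sel_prob XnXs subr0 mul0r addr0 lexx ler01.
have pX_le := sel_prob_le XXs; have e_le4 := expR1_le4 R; have e_ge0 := expR_ge0 (1 : R).
apply/andP; split; first by nra.
apply: (@le_trans _ _ (expR (sel_prob X * (expR 1 - 1)))).
  by have := expR_ge1Dx (sel_prob X * (expR 1 - 1)); nra.
by rewrite ler_expR; nra.
Qed.

Lemma expect_potential_le D :
  \sum_g w g * potential D g <= #|T|%:R * (expR (- c) + expR (3 * c * d - D)).
Proof.
rewrite mulr_natl -sumr_const.
under eq_bigr do rewrite mulrDr !mulr_sumr.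
rewrite big_split /= [X in X + _]exchange_big [X in _ + X]exchange_big -big_split /=.
apply: ler_sum => v _.
exact: lerD (expect_uncovered_le v) (expect_degree_pot_le D v).
Qed.

Lemma frac_cover_rounding D :
  #|T|%:R * (expR (- c) + expR (3 * c * d - D)) < 1 ->
  exists Ys : {set {set T}}, Ys \subset Xs /\ weak_nbhd_cover e r s D Ys.
Proof.
move=> budget_lt1.
have [g w_gt0 pot_lt1] := exists_pos_weight_lt (fun g => bern_weight_ge0 g sel_prob01)
  (sum_bern_weight _) (le_lt_trans (expect_potential_le D) budget_lt1).
have sel_sub : [set X | g X] \subset Xs.
  apply/subsetP => X; rewrite inE => gX; apply: contraTT (bern_support w_gt0 gX).
  by rewrite /sel_prob => /negbTE->; rewrite eqxx.
case: cover => _ centered _ _.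
exists [set X | g X]; split=> //; split.
- by move=> Y /(subsetP sel_sub); apply: centered.
- move=> v; have := le_lt_trans (uncovered_le_potential D v g) pot_lt1.
  rewrite /uncovered; case: existsP => [[X /andP[gX sub]] _|_]; last by rewrite ltxx.
  by exists X; rewrite ?inE.
- move=> v; have := le_lt_trans (degree_pot_le_potential D v g) pot_lt1.
  suff -> : [set Y in [set X | g X] | v \in Y] = [set X | g X & v \in X].
    by rewrite /degree_pot expR_lt1 subr_lt0 => /ltW.
  by apply/setP => X; rewrite !inE.
Qed.

End RandomizedRounding.

Lemma rounding_budget_lt1 (R : realType) (L d : R) : 1 <= L -> 1 <= d ->
  expR L * (expR (- (L + 1)) + expR (3 * (L + 1) * d - 36 * L * d)) < 1.
Proof.
move=> L_ge1 d_ge1.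
rewrite mulrDr -!expRD opprD addrA subrr add0r.
have : expR (L + (3 * (L + 1) * d - 36 * L * d)) <= expR (-1) by rewrite ler_expR; nra.
have := expRxMexpNx_1 (1 : R); have := expR_gt1Dx (oner_neq0 R).
have := expR_gt0 (-1 : R); nra.
Qed.

Theorem lemma6p5 (R : realType) (T : finType) (e : rel T) (r s : nat) (d : R)
    (Xs : {set {set T}}) (f : {set T} -> R) :
  simple_graph e -> (5 <= #|T|)%N ->
  frac_weak_nbhd_cover e r s d Xs f ->
  exists Ys : {set {set T}}, Ys \subset Xs /\
    weak_nbhd_cover e r s (36 * ln (#|T|%:R : R) * d) Ys.
Proof.
move=> _ n_ge5 cover.
have [v _] : exists v : T, v \in T by apply/card_gt0P; apply: leq_trans n_ge5.
have n_pos : (0 : R) < #|T|%:R by rewrite ltr0n; apply: leq_trans n_ge5.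
set L := ln _.
have L_ge1 : 1 <= L.
  rewrite -ler_expR lnK ?posrE //; apply: le_trans (expR1_le4 R) _.
  by rewrite ler_nat; apply: leq_trans n_ge5.
have c_ge0 : 0 <= L + 1 by lra.
apply: (frac_cover_rounding cover c_ge0).
have expL : expR L = #|T|%:R by rewrite lnK ?posrE.
rewrite -expL.
exact: rounding_budget_lt1 L_ge1 (frac_cover_deg_ge1 cover v).
Qed.
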